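(* Let $S=(n,\phi,F)$ be a semicoherent system whose component lifetimes $X_1,\ldots,X_n$ are exchangeable and have no ties. Then for every $j\in[n]$, $$I_{\mathrm{BP}}^{(j)}=b_j:=\sum_{A\subseteq[n]\setminus\{j\}}\frac{1}{n\binom{n-1}{|A|}}\big(\phi(A\cup\{j\})-\phi(A)\big).$$
   Context: Semicoherent system: $\phi:2^{[n]}\to\{0,1\}$ nondecreasing (subsets identified with Boolean vectors), $\phi(\varnothing)=0$, $\phi([n])=1$; $F$ is the joint c.d.f. of nonnegative lifetimes; no ties means $\Pr(X_i=X_k)=0$ for $i\neq k$. System lifetime $T=\inf\{t\geq0:\phi(\{i:X_i>t\})=0\}$; $I_{\mathrm{BP}}^{(j)}=\Pr(T=X_j)$. *)

From mathcomp Require Import all_boot all_fingroup.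
From Stdlib Require Import Reals.

Set Implicit Arguments.
Unset Strict Implicit.
Unset Printing Implicit Defensive.

Local Open Scope R_scope.

(* P is total on all predicates but only meaningful on events. *)
Record probability_space := {
  ps_carrier :> Type;
  ps_meas : (ps_carrier -> Prop) -> Prop;
  ps_P : (ps_carrier -> Prop) -> R;
  meas_full : ps_meas (fun _ => True);
  meas_compl : forall A, ps_meas A -> ps_meas (fun w => ~ A w);
  meas_union : forall A : nat -> ps_carrier -> Prop,
      (forall k, ps_meas (A k)) -> ps_meas (fun w => exists k, A k w);
  P_nonneg : forall A, ps_meas A -> 0 <= ps_P A;
  P_full : ps_P (fun _ => True) = 1;
  P_sigma_additive : forall A : nat -> ps_carrier -> Prop,
      (forall k, ps_meas (A k)) ->
      (forall k l, k <> l -> forall w, A k w -> A l w -> False) ->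
      infinite_sum (fun k => ps_P (A k)) (ps_P (fun w => exists k, A k w))
}.

Inductive borel_Rn (n : nat) : (('I_n -> R) -> Prop) -> Prop :=
  | borel_gen (i : 'I_n) (t : R) : borel_Rn (fun x => x i <= t)
  | borel_compl (B : ('I_n -> R) -> Prop) :
      borel_Rn B -> borel_Rn (fun x => ~ B x)
  | borel_union (B : nat -> ('I_n -> R) -> Prop) :
      (forall k, borel_Rn (B k)) -> borel_Rn (fun x => exists k, B k x).

Definition random_variable (Om : probability_space) (Y : Om -> R) : Prop :=
  forall t, @ps_meas Om (fun w => Y w <= t).

Definition semicoherent (n : nat) (phi : {set 'I_n} -> bool) : Prop :=
  (forall A B : {set 'I_n}, A \subset B -> leq (phi A) (phi B)) /\
  phi set0 = false /\ phi setT = true.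

Definition exchangeable (n : nat) (Om : probability_space)
    (X : 'I_n -> Om -> R) : Prop :=
  forall (s : {perm 'I_n}) (B : ('I_n -> R) -> Prop), borel_Rn B ->
    @ps_P Om (fun w => B (fun i => X (s i) w)) =
    @ps_P Om (fun w => B (fun i => X i w)).

Definition no_ties (n : nat) (Om : probability_space)
    (X : 'I_n -> Om -> R) : Prop :=
  forall i k : 'I_n, i <> k -> @ps_P Om (fun w => X i w = X k w) = 0.

Definition Rltb (x y : R) : bool := if Rlt_dec x y then true else false.

Definition is_inf (S : R -> Prop) (m : R) : Prop :=
  (forall s, S s -> m <= s) /\
  (forall m', (forall s, S s -> m' <= s) -> m' <= m).

(* {t >= 0 : phi({i : X_i > t}) = 0}; the system lifetime T(w) is its inf. *)
Definition failed_times (n : nat) (phi : {set 'I_n} -> bool)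
    (Om : probability_space) (X : 'I_n -> Om -> R) (w : Om) : R -> Prop :=
  fun t => 0 <= t /\ phi [set i | Rltb t (X i w)] = false.

Definition I_BP (n : nat) (phi : {set 'I_n} -> bool)
    (Om : probability_space) (X : 'I_n -> Om -> R) (j : 'I_n) : R :=
  @ps_P Om (fun w => is_inf (failed_times phi X w) (X j w)).

Definition bcoef (n : nat) (phi : {set 'I_n} -> bool) (j : 'I_n) : R :=
  \big[Rplus/0]_(A : {set 'I_n} | j \notin A)
     (/ (INR n * INR 'C(n.-1, #|A|)) * (INR (phi (j |: A)) - INR (phi A))).

(* Write T for the system lifetime.  The proof is a counting argument on rankings:
   - For a fixed lifetime vector x (nonnegative, semicoherent phi), T = x_j holds iff
     j is critical at x: phi fails with the components outliving x_j but works with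
     those lasting at least x_j ([is_inf_failed_critical]).
   - Say that j cuts x at A when the components strictly above x_j are exactly A and
     all others are strictly below.  With distinct coordinates, j is critical iff it
     cuts x at a critical path set A (j notin A, phi(A + j) = 1, phi(A) = 0)
     ([critical_cut]); cuts at different sets are disjoint.
   - Exchangeability makes all cut events with |A| = m equally likely
     ([P_cut_invariant], via a relabelling permutation); without ties the n C(n-1, m)
     cut events of size m almost surely partition the sample space, so each has
     probability 1 / (n C(n-1, m)) ([P_cut]).
   Summing over critical path sets gives b_j ([bcoef_critical_sets]). *)
From HB Require Import structures.
From mathcomp Require Import all_boot all_fingroup.
From Stdlib Require Import Reals ZArith Lra Lia.
From Stdlib Require Import Classical FunctionalExtensionality PropExtensionality.

Set Implicit Arguments.
Unset Strict Implicit.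
Local Open Scope R_scope.

HB.instance Definition _ :=
  Monoid.isComLaw.Build R 0 Rplus (fun a b c => esym (Rplus_assoc a b c)) Rplus_comm Rplus_0_l.

Lemma pred_ext (T : Type) (A B : T -> Prop) : (forall w, A w <-> B w) -> A = B.
Proof.
by move=> AB; apply: functional_extensionality => w; apply: propositional_extensionality.
Qed.

Lemma P_ext (Om : probability_space) (A B : Om -> Prop) :
  (forall w, A w <-> B w) -> ps_P A = ps_P B.
Proof. by move/pred_ext->. Qed.

Lemma meas_ext (Om : probability_space) (A B : Om -> Prop) :
  (forall w, A w <-> B w) -> ps_meas A -> ps_meas B.
Proof. by move/pred_ext->. Qed.

Lemma meas_empty (Om : probability_space) : @ps_meas Om (fun _ => False).
Proof. by apply: meas_ext (meas_compl (meas_full Om)) => w; split. Qed.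

Lemma meas_or (Om : probability_space) (A B : Om -> Prop) :
  ps_meas A -> ps_meas B -> ps_meas (fun w => A w \/ B w).
Proof.
move=> mA mB; apply: (meas_ext _ (meas_union (A := fun k => if k is 0%nat then A else B) _)).
  by move=> w; split=> [[[|k] ?]|[?|?]]; [left|right|exists 0%nat|exists 1%nat].
by case.
Qed.

Lemma meas_and (Om : probability_space) (A B : Om -> Prop) :
  ps_meas A -> ps_meas B -> ps_meas (fun w => A w /\ B w).
Proof.
move=> mA mB; apply: (meas_ext _ (meas_compl (meas_or (meas_compl mA) (meas_compl mB)))).
by move=> w; split=> [H|[? ?] []//]; split; apply: NNPP => ?; apply: H; tauto.
Qed.

(* The empty event is null: otherwise countably many copies would have infinite mass. *)
Lemma P_empty (Om : probability_space) : @ps_P Om (fun _ => False) = 0.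
Proof.
set c := ps_P _.
have := P_sigma_additive (A := fun _ : nat => fun _ : Om => False)
  (fun _ => meas_empty Om) (fun _ _ _ _ f _ => f).
rewrite (P_ext (B := fun _ => False)); last by move=> w; split=> // -[].
rewrite -/c => sum_c.
have c_ge0 : 0 <= c by apply: P_nonneg; apply: meas_empty.
have partial N : sum_f_R0 (fun _ => c) N = INR N.+1 * c.
  elim: N => [|N IH]; first by rewrite /=; lra.
  rewrite [sum_f_R0 _ _]/= IH (S_INR N.+1); lra.
case: (Rle_lt_or_eq_dec _ _ c_ge0) => // c_gt0; exfalso.
have [N HN] := sum_c (c / 2) ltac:(lra).
have := HN N.+1 ltac:(lia); rewrite partial /R_dist !S_INR Rabs_right;
  have := pos_INR N; nra.
Qed.

(* Finite additivity, from sigma-additivity padded with empty events. *)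
Lemma P_add (Om : probability_space) (A B : Om -> Prop) :
  ps_meas A -> ps_meas B -> (forall w, A w -> B w -> False) ->
  ps_P (fun w => A w \/ B w) = ps_P A + ps_P B.
Proof.
move=> mA mB AB.
pose S k : Om -> Prop := match k with 0%nat => A | 1%nat => B | _ => fun _ => False end.
have mS k : ps_meas (S k) by case: k => [|[|k]] //=; apply: meas_empty.
have dS k l : k <> l -> forall w, S k w -> S l w -> False.
  by case: k l => [|[|k]] [|[|l]] //= _ w; have := AB w; tauto.
rewrite (P_ext (B := fun w => exists k, S k w)); last first.
  by move=> w; split=> [[?|?]|[[|[|k]] //= ?]]; [exists 0%nat|exists 1%nat|left|right].
apply: (uniqueness_sum _ _ _ (P_sigma_additive mS dS)) => eps eps_gt0.
exists 1%nat => N N_ge1.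
have -> : sum_f_R0 (fun k => ps_P (S k)) N = ps_P A + ps_P B.
  case: N N_ge1 => [|N] N_ge1; first lia.
  elim: N {N_ge1} => [|N IH] //=; rewrite /= in IH; rewrite IH P_empty; lra.
rewrite /R_dist Rminus_diag Rabs_R0; lra.
Qed.

Lemma P_mono (Om : probability_space) (A B : Om -> Prop) :
  ps_meas A -> ps_meas B -> (forall w, A w -> B w) -> ps_P A <= ps_P B.
Proof.
move=> mA mB AB; have mBA := meas_and mB (meas_compl mA).
rewrite (P_ext (A := B) (B := fun w => A w \/ (B w /\ ~ A w))); last first.
  by move=> w; split=> [?|[/AB|[]]] //; tauto.
rewrite P_add //; last tauto.
have := P_nonneg mBA; lra.
Qed.

Lemma P_sub (Om : probability_space) (A B : Om -> Prop) :
  ps_meas A -> ps_meas B -> ps_P (fun w => A w \/ B w) <= ps_P A + ps_P B.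
Proof.
move=> mA mB; have mBA := meas_and mB (meas_compl mA).
rewrite (P_ext (B := fun w => A w \/ (B w /\ ~ A w))); last by move=> w; tauto.
rewrite P_add //; last tauto.
have : ps_P (fun w => B w /\ ~ A w) <= ps_P B by apply: P_mono => // w [].
lra.
Qed.

Lemma P_and_almost_sure (Om : probability_space) (Y N : Om -> Prop) :
  ps_meas Y -> ps_meas N -> ps_P (fun w => ~ N w) = 0 ->
  ps_P Y = ps_P (fun w => Y w /\ N w).
Proof.
move=> mY mN notN0; have mYnN := meas_and mY (meas_compl mN).
rewrite (P_ext (A := Y) (B := fun w => (Y w /\ N w) \/ (Y w /\ ~ N w))); last first.
  by move=> w; split=> [y|]; [case: (classic (N w)) | ]; tauto.
rewrite P_add //; [|exact: meas_and|tauto].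
have : ps_P (fun w => Y w /\ ~ N w) <= ps_P (fun w => ~ N w).
  by apply: P_mono => //; [exact: meas_compl|tauto].
have := P_nonneg mYnN; lra.
Qed.

Lemma exists_in_cons (I : eqType) (a : I) (r : seq I) (Q : I -> Prop) :
  (exists2 k, k \in a :: r & Q k) <-> (Q a \/ exists2 k, k \in r & Q k).
Proof.
split=> [[k]|[Qa|[k k_r Qk]]].
- by rewrite in_cons => /orP[/eqP->|k_r] Qk; [left|right; exists k].
- by exists a; rewrite ?mem_head.
- by exists k; rewrite // in_cons k_r orbT.
Qed.

Lemma P_seq_union (Om : probability_space) (I : eqType) (r : seq I) (E : I -> Om -> Prop) :
  uniq r -> (forall k, ps_meas (E k)) ->
  (forall k l, k \in r -> l \in r -> k <> l -> forall w, E k w -> E l w -> False) ->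
  ps_meas (fun w => exists2 k, k \in r & E k w) /\
  ps_P (fun w => exists2 k, k \in r & E k w) = \big[Rplus/0]_(k <- r) ps_P (E k).
Proof.
elim: r => [|a r IH] /= uniq_r mE disj.
  rewrite big_nil -(P_empty Om); split.
    by apply: meas_ext (meas_empty Om) => w; split=> // -[].
  by apply: P_ext => w; split=> // -[].
case/andP: uniq_r => a_notin_r uniq_r.
have in_cons_r k : k \in r -> k \in a :: r by rewrite in_cons => ->; rewrite orbT.
have [m_r P_r] := IH uniq_r mE (fun k l hk hl => disj k l (in_cons_r k hk) (in_cons_r l hl)).
have split_w w := exists_in_cons a r (fun k => E k w).
split; first by apply: (meas_ext (fun w => iff_sym (split_w w))); apply: meas_or.
rewrite (P_ext split_w) big_cons P_add // -?P_r // => w Ea [k k_r Ek].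
apply: (disj a k (mem_head _ _) (in_cons_r k k_r)) Ea Ek.
by move=> ak; move: a_notin_r; rewrite ak k_r.
Qed.

Lemma P_fin_union (Om : probability_space) (I : finType) (Q : pred I) (E : I -> Om -> Prop) :
  (forall k, ps_meas (E k)) ->
  (forall k l, Q k -> Q l -> k <> l -> forall w, E k w -> E l w -> False) ->
  ps_meas (fun w => exists2 k, Q k & E k w) /\
  ps_P (fun w => exists2 k, Q k & E k w) = \big[Rplus/0]_(k | Q k) ps_P (E k).
Proof.
move=> mE disj.
have [m e] := P_seq_union (enum_uniq Q) mE
  (fun k l hk hl => disj k l ltac:(by rewrite mem_enum in hk) ltac:(by rewrite mem_enum in hl)).
have enumE w : (exists2 k, k \in enum Q & E k w) <-> (exists2 k, Q k & E k w).
  by split=> -[k k_Q Ek]; exists k; rewrite ?mem_enum in k_Q *.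
split; first exact: meas_ext enumE m.
by rewrite -(P_ext enumE) e big_enum_cond; apply: eq_bigl => k; rewrite andbT.
Qed.

Lemma P_fin_union_null (Om : probability_space) (I : finType) (E : I -> Om -> Prop) :
  (forall k, ps_meas (E k)) -> (forall k, ps_P (E k) = 0) ->
  ps_meas (fun w => exists k, E k w) /\ ps_P (fun w => exists k, E k w) = 0.
Proof.
move=> mE E0.
suff [m e] : ps_meas (fun w => exists2 k, k \in enum I & E k w) /\
             ps_P (fun w => exists2 k, k \in enum I & E k w) = 0.
  have enumE w : (exists2 k, k \in enum I & E k w) <-> (exists k, E k w).
    by split=> [[k _ ?]|[k ?]]; exists k; rewrite ?mem_enum.
  by split; [exact: meas_ext enumE m | rewrite -(P_ext enumE)].
elim: (enum I) => [|a r [m_r P_r]].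
  rewrite -(P_empty Om); split; first by apply: meas_ext (meas_empty Om) => w; split=> // -[].
  by apply: P_ext => w; split=> // -[].
have split_w w := exists_in_cons a r (fun k => E k w).
have mU := meas_or (mE a) m_r.
split; first exact: meas_ext (fun w => iff_sym (split_w w)) mU.
rewrite (P_ext split_w); have := P_sub (mE a) m_r; have := P_nonneg mU.
rewrite E0 P_r; lra.
Qed.

Lemma borel_ext n (B C : ('I_n -> R) -> Prop) :
  (forall x, B x <-> C x) -> borel_Rn B -> borel_Rn C.
Proof. by move/pred_ext->. Qed.

Lemma borel_or n (A B : ('I_n -> R) -> Prop) :
  borel_Rn A -> borel_Rn B -> borel_Rn (fun x => A x \/ B x).
Proof.
move=> bA bB; apply: (borel_ext _ (borel_union (B := fun k => if k is 0%nat then A else B) _)).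
  by move=> x; split=> [[[|k] ?]|[?|?]]; [left|right|exists 0%nat|exists 1%nat].
by case.
Qed.

Lemma borel_and n (A B : ('I_n -> R) -> Prop) :
  borel_Rn A -> borel_Rn B -> borel_Rn (fun x => A x /\ B x).
Proof.
move=> bA bB; apply: (borel_ext _ (borel_compl (borel_or (borel_compl bA) (borel_compl bB)))).
by move=> x; split=> [H|[? ?] []//]; split; apply: NNPP => ?; apply: H; tauto.
Qed.

Lemma borel_imp n (A B : ('I_n -> R) -> Prop) :
  borel_Rn A -> borel_Rn B -> borel_Rn (fun x => A x -> B x).
Proof.
move=> bA bB; apply: (borel_ext _ (borel_or (borel_compl bA) bB)) => x.
split=> [[nA /nA|Bx _] //|AB].
by case: (classic (A x)) => [/AB|]; [right|left].
Qed.

Lemma borel_iff n (A B : ('I_n -> R) -> Prop) :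
  borel_Rn A -> borel_Rn B -> borel_Rn (fun x => A x <-> B x).
Proof. by move=> bA bB; apply: borel_ext (borel_and (borel_imp bA bB) (borel_imp bB bA)). Qed.

(* Constant predicates are Borel as soon as there is a coordinate to talk about. *)
Lemma borel_const n (i0 : 'I_n) (P : Prop) : @borel_Rn n (fun _ => P).
Proof.
have bF : @borel_Rn n (fun _ => False).
  apply: borel_ext (borel_and (borel_gen i0 0) (borel_compl (borel_gen i0 0))).
  by move=> x; split=> // -[].
case: (classic P) => p; last by apply: borel_ext bF => x; tauto.
by apply: borel_ext (borel_compl bF) => x; tauto.
Qed.

Lemma borel_forall_fin n (i0 : 'I_n) (I : finType) (C : I -> ('I_n -> R) -> Prop) :
  (forall k, borel_Rn (C k)) -> borel_Rn (fun x => forall k, C k x).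
Proof.
move=> bC; suff : borel_Rn (fun x => forall k, k \in enum I -> C k x).
  by apply: borel_ext => x; split=> H k; [apply: H; rewrite mem_enum|].
elim: (enum I) => [|a r IH]; first by apply: borel_ext (borel_const i0 True) => x.
apply: borel_ext (borel_and (bC a) IH) => x; split=> [[Ca Cr] k|H].
  by rewrite in_cons => /orP[/eqP->|/Cr].
by split=> [|k k_r]; apply: H; rewrite in_cons ?eqxx ?k_r ?orbT.
Qed.

Lemma borel_exists_fin n (i0 : 'I_n) (I : finType) (C : I -> ('I_n -> R) -> Prop) :
  (forall k, borel_Rn (C k)) -> borel_Rn (fun x => exists k, C k x).
Proof.
move=> bC; apply: (borel_ext _ (borel_compl (borel_forall_fin i0 (fun k => borel_compl (bC k))))).
move=> x; split=> [H|[k Ck] H]; last exact: H k Ck.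
by apply: NNPP => nE; apply: H => k Ck; apply: nE; exists k.
Qed.

Lemma nat_fraction_dense (u v : R) : u < v ->
  exists a b c : nat, u < (INR a - INR b) / INR c.+1 < v.
Proof.
move=> uv.
have [N [invN_lt N_gt0]] := archimed_cor1 (v - u) ltac:(lra).
have N_pos : 0 < INR N by apply: lt_0_INR.
have [up_gt up_le] := archimed (u * INR N).
have [a [b ab]] : exists a b : nat, IZR (up (u * INR N)) = INR a - INR b.
  case: (up _) => [|p|p]; first by exists 0%nat, 0%nat; rewrite /=; lra.
    by exists (Pos.to_nat p), 0%nat; rewrite INR_IZR_INZ positive_nat_Z /=; lra.
  exists 0%nat, (Pos.to_nat p).
  by rewrite IZR_NEG (INR_IZR_INZ (Pos.to_nat p)) positive_nat_Z /=; lra.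
exists a, b, N.-1; rewrite prednK -?ab; last by apply/ltP.
have NinvN : INR N * / INR N = 1 by field; lra.
have : 1 < INR N * (v - u).
  by have := Rmult_lt_compat_l _ _ _ N_pos invN_lt; rewrite NinvN.
split; apply: (Rmult_lt_reg_r (INR N)) => //; rewrite /Rdiv Rmult_assoc Rinv_l; nra.
Qed.

(* Comparisons between coordinates are Borel: x_i < x_k iff a fraction separates them. *)
Lemma borel_lt n (i k : 'I_n) : borel_Rn (fun x => x i < x k).
Proof.
pose q (a b c : nat) := (INR a - INR b) / INR c.+1.
apply: (borel_ext (B := fun x => exists a b c, x i <= q a b c /\ ~ x k <= q a b c)).
  move=> x; split=> [[a [b [c]]]|/nat_fraction_dense [a [b [c ?]]]]; first lra.
  by exists a, b, c; rewrite /q; lra.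
do 3 apply: borel_union => ?.
by apply: borel_and; [|apply: borel_compl]; apply: borel_gen.
Qed.

Lemma borel_set_pred n (i0 : 'I_n) (S : ('I_n -> R) -> {set 'I_n}) (P : {set 'I_n} -> Prop) :
  (forall l, borel_Rn (fun x => l \in S x)) -> borel_Rn (fun x => P (S x)).
Proof.
move=> bS.
apply: (borel_ext (B := fun x => exists A, P A /\ forall l, l \in A <-> l \in S x)).
  move=> x; split=> [[A [PA AS]]|PS]; last by exists (S x).
  by have -> : S x = A by apply/setP => l; apply/idP/idP => /AS.
apply: (borel_exists_fin i0) => A; apply: borel_and; first exact: borel_const.
by apply: (borel_forall_fin i0) => l; apply: borel_iff; [apply: borel_const|].
Qed.

Lemma borel_meas n (Om : probability_space) (X : 'I_n -> Om -> R) (B : ('I_n -> R) -> Prop) :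
  (forall i, random_variable (X i)) -> borel_Rn B -> ps_meas (fun w => B (fun i => X i w)).
Proof. by move=> mX; elim=> [i t|C _|C _]; [exact: mX|exact: meas_compl|exact: meas_union]. Qed.

Lemma RltbP a b : Rltb a b = true <-> a < b.
Proof. by rewrite /Rltb; case: Rlt_dec. Qed.

Lemma RltbF a b : Rltb a b = false <-> ~ a < b.
Proof. by rewrite /Rltb; case: Rlt_dec. Qed.

(* Reading x as a vector of lifetimes: the components still working at time t,
   those working up to time t, and those outliving component i. *)
Definition alive n (x : 'I_n -> R) (t : R) : {set 'I_n} := [set l | Rltb t (x l)].
Definition alive_upto n (x : 'I_n -> R) (t : R) : {set 'I_n} := [set l | ~~ Rltb (x l) t].
Definition above n (x : 'I_n -> R) (i : 'I_n) : {set 'I_n} := alive x (x i).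

Definition distinct n (x : 'I_n -> R) : Prop := forall i k, i <> k -> x i <> x k.

Definition cut n (A : {set 'I_n}) (i : 'I_n) (x : 'I_n -> R) : Prop :=
  forall k, k <> i -> (k \in A -> x i < x k) /\ (k \notin A -> x k < x i).

(* A cut is a finite Boolean combination of coordinate comparisons. *)
Lemma borel_cut n (A : {set 'I_n}) (i : 'I_n) : borel_Rn (cut A i).
Proof.
apply: (borel_forall_fin i) => k; apply: borel_imp; first exact: borel_const.
by apply: borel_and; apply: borel_imp; (exact: borel_const || exact: borel_lt).
Qed.

Lemma above_notin n (x : 'I_n -> R) i : i \notin above x i.
Proof. by rewrite inE; apply/negP => /RltbP; lra. Qed.

Lemma above_cut n (x : 'I_n -> R) i : distinct x -> cut (above x i) i x.
Proof.
move=> dx k ki; rewrite inE; split=> [/RltbP //|/negP xik].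
have := dx k i ki; have : ~ x i < x k by move/RltbP.
lra.
Qed.

Lemma cut_above n (A : {set 'I_n}) i (x : 'I_n -> R) :
  i \notin A -> cut A i x -> above x i = A.
Proof.
move=> iA cutA; apply/setP => k; rewrite inE.
case: (eqVneq k i) => [->|/eqP ki]; first by rewrite (negbTE iA); apply/RltbF; lra.
have [A_gt nA_lt] := cutA k ki.
by case kA: (k \in A); [apply/RltbP; exact: A_gt|apply/RltbF; have := nA_lt (negbT kA); lra].
Qed.

Lemma cut_alive_upto n (A : {set 'I_n}) j (x : 'I_n -> R) :
  j \notin A -> cut A j x -> alive_upto x (x j) = j |: A.
Proof.
move=> jA cutA; apply/setP => l; rewrite !inE.
case: (eqVneq l j) => [->|/eqP lj] /=; first by apply/negP => /RltbP; lra.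
have [A_gt nA_lt] := cutA l lj.
case lA: (l \in A); first by apply/negP => /RltbP; have := A_gt lA; lra.
by rewrite (proj2 (RltbP _ _) (nA_lt (negbT lA))).
Qed.

(* If x_i < x_k then k lies in the set cut by i, and everything k cuts above it too. *)
Lemma cut_card_lt n (A B : {set 'I_n}) i k (x : 'I_n -> R) :
  i \notin A -> k \notin B -> cut A i x -> cut B k x -> x i < x k -> (#|B| < #|A|)%nat.
Proof.
move=> iA kB cutA cutB xik.
have in_A l : l <> i -> x i < x l -> l \in A.
  by move=> li xil; apply: contraT => /(cutA l li).2; lra.
have ki : k <> i by move=> e; rewrite e in xik; lra.
have sub : k |: B \subset A.
  apply/subsetP => l; rewrite in_setU1 => /orP[/eqP->|lB]; first exact: in_A.
  have lk : l <> k by move=> e; rewrite -e lB in kB.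
  have xkl := (cutB l lk).1 lB.
  by apply: in_A; [move=> e; rewrite e in xkl; lra|lra].
by have := subset_leq_card sub; rewrite cardsU1 kB.
Qed.

Lemma cut_disjoint n (A B : {set 'I_n}) i k (x : 'I_n -> R) :
  i \notin A -> k \notin B -> #|A| = #|B| -> (i, A) <> (k, B) -> cut A i x -> cut B k x -> False.
Proof.
move=> iA kB cardAB ne cutA cutB.
case: (eqVneq i k) => [ik|/eqP ik].
  by subst k; apply: ne; rewrite -(cut_above iA cutA) (cut_above kB cutB).
have [xik|xki] : x i < x k \/ x k < x i.
  by have [A_gt nA_lt] := cutA k (nesym ik); case: (boolP (k \in A)) => [/A_gt|/nA_lt]; auto.
- by have := cut_card_lt iA kB cutA cutB xik; rewrite cardAB ltnn.
- by have := cut_card_lt kB iA cutB cutA xki; rewrite cardAB ltnn.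
Qed.

Lemma card_notin n (A : {set 'I_n}) i : i \notin A -> (#|A| <= n.-1)%nat.
Proof.
move=> iA; have : A \subset [set~ i].
  by apply/subsetP => l; rewrite in_setC1; apply: contraTneq => ->.
by move/subset_leq_card; rewrite cardsC1 card_ord.
Qed.

(* With distinct coordinates, every size m < n is attained by exactly one component's
   upper set (the component of rank n - m); we only need that it is attained. *)
Lemma cut_cover n (x : 'I_n -> R) m : distinct x -> (m < n)%nat ->
  exists i, #|above x i| = m.
Proof.
case: n x => [//|n] x dx m_lt.
have card_lt i : (#|above x i| < n.+1)%nat := card_notin (above_notin x i).
have card_gt i k : x i < x k -> (#|above x k| < #|above x i|)%nat.
  by apply: cut_card_lt; (exact: above_notin || exact: above_cut).
pose f i : 'I_n.+1 := inord #|above x i|.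
have f_inj : injective f.
  move=> i k /(congr1 val); rewrite /= !inordK // => card_eq.
  apply: NNPP => ik.
  have xik : x i < x k \/ x k < x i by have := dx i k ik; lra.
  by case: xik => /card_gt; rewrite card_eq ltnn.
have [g fg gf] := injF_bij f_inj.
by exists (g (inord m)); have := gf (inord m); rewrite /f => /(congr1 val); rewrite /= !inordK.
Qed.

Definition rank_list n (k : 'I_n) (B : {set 'I_n}) : seq 'I_n := k :: enum B ++ enum (~: (k |: B)).

Lemma rank_list_enum n (k : 'I_n) (B : {set 'I_n}) : k \notin B ->
  [/\ uniq (rank_list k B), forall l, l \in rank_list k B & size (rank_list k B) = n].
Proof.
move=> kB.
have uniq_l : uniq (rank_list k B).
  rewrite /rank_list cons_uniq mem_cat !mem_enum !inE eqxx /= (negbTE kB) /=.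
  rewrite cat_uniq !enum_uniq /= andbT; apply/hasPn => l.
  by rewrite !mem_enum !inE negb_or => /andP[].
have mem_l l : l \in rank_list k B.
  by rewrite /rank_list in_cons mem_cat !mem_enum !inE; case: (l == k); case: (l \in B).
split=> //.
have := perm_size (uniq_perm uniq_l (enum_uniq 'I_n) (fun l => ltac:(by rewrite mem_l mem_enum))).
by rewrite size_enum_ord.
Qed.

Lemma exists_perm n (A B : {set 'I_n}) (i k : 'I_n) :
  i \notin A -> k \notin B -> #|A| = #|B| ->
  exists s : {perm 'I_n}, s k = i /\ forall l, (s l \in A) = (l \in B).
Proof.
move=> iA kB cardAB.
have [uA mA sA] := rank_list_enum iA.
have [uB mB sB] := rank_list_enum kB.
have size_eq : size (rank_list i A) = size (rank_list k B) by rewrite sA sB.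
pose f l := nth i (rank_list i A) (index l (rank_list k B)).
have f_inj : injective f.
  move=> l1 l2; rewrite /f => /eqP; rewrite nth_uniq ?size_eq ?index_mem // => /eqP e.
  by rewrite -(nth_index k (mB l1)) -(nth_index k (mB l2)) e.
exists (perm f_inj); split; first by rewrite permE /f /rank_list /= eqxx.
move=> l; rewrite permE /f /rank_list /=.
have sizeAB : size (enum A) = size (enum B) by rewrite -!cardE.
have sizeC : size (enum (~: (i |: A))) = size (enum (~: (k |: B))).
  by move: size_eq; rewrite /rank_list /= !size_cat sizeAB => -[] /addnI.
case: (eqVneq k l) => [<-|kl]; first by rewrite /= (negbTE kB) (negbTE iA).
rewrite /= index_cat nth_cat mem_enum sizeAB.
case lB: (l \in B).
  by rewrite index_mem mem_enum lB -mem_enum mem_nth // sizeAB index_mem mem_enum.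
have lC : l \in enum (~: (k |: B)) by rewrite mem_enum !inE lB orbF eq_sym.
rewrite ltnNge leq_addr /= addKn.
have : nth i (enum (~: (i |: A))) (index l (enum (~: (k |: B)))) \in enum (~: (i |: A)).
  by apply: mem_nth; rewrite sizeC index_mem.
by rewrite mem_enum !inE negb_or => /andP[_ /negbTE].
Qed.

Lemma cut_perm n (A B : {set 'I_n}) i k (s : {perm 'I_n}) (x : 'I_n -> R) :
  s k = i -> (forall l, (s l \in A) = (l \in B)) ->
  cut B k (fun l => x (s l)) <-> cut A i x.
Proof.
move=> ski sAB; split=> cutB l.
  move=> li; have sl : s ((s^-1)%g l) = l by rewrite permKV.
  have lk : (s^-1)%g l <> k by move=> e; apply: li; rewrite -sl e.
  by have := cutB _ lk; rewrite ski -sAB sl.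
move=> lk; have sli : s l <> i by move=> e; apply: lk; apply: (@perm_inj _ s); rewrite e ski.
by have := cutB _ sli; rewrite ski -sAB.
Qed.

Lemma P_cut_invariant n (Om : probability_space) (X : 'I_n -> Om -> R) (A B : {set 'I_n}) i k :
  exchangeable X -> i \notin A -> k \notin B -> #|A| = #|B| ->
  ps_P (fun w => cut A i (fun l => X l w)) = ps_P (fun w => cut B k (fun l => X l w)).
Proof.
move=> exX iA kB cardAB; have [s [ski sAB]] := exists_perm iA kB cardAB.
rewrite -(exX s _ (borel_cut B k)).
by apply: P_ext => w; rewrite (cut_perm (fun l => X l w) ski sAB).
Qed.

Lemma distinct_almost_sure n (Om : probability_space) (X : 'I_n -> Om -> R) (i0 : 'I_n) :
  (forall i, random_variable (X i)) -> no_ties X ->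
  ps_meas (fun w => distinct (fun l => X l w)) /\
  ps_P (fun w => ~ distinct (fun l => X l w)) = 0.
Proof.
move=> mX ntX.
pose tie (p : 'I_n * 'I_n) (w : Om) := p.1 <> p.2 /\ X p.1 w = X p.2 w.
have m_tie p : ps_meas (tie p).
  apply: (borel_meas (B := fun x => p.1 <> p.2 /\ x p.1 = x p.2)) => //.
  apply: borel_and; first exact: borel_const.
  have b_lt (a b : 'I_n) : borel_Rn (fun x => ~ x a < x b) by apply: borel_compl; exact: borel_lt.
  by apply: (borel_ext _ (borel_and (b_lt p.1 p.2) (b_lt p.2 p.1))) => x; lra.
have P_tie p : ps_P (tie p) = 0.
  case: p => a b; case: (eqVneq a b) => [<-|/eqP ab].
    by rewrite -(P_empty Om); apply: P_ext => w; rewrite /tie /=; tauto.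
  by rewrite -(ntX a b ab); apply: P_ext => w; rewrite /tie /=; tauto.
have [m_ties P_ties] := P_fin_union_null m_tie P_tie.
have ties_w w : (exists p, tie p w) <-> ~ distinct (fun l => X l w).
  split=> [[[a b] [ab e]] dx|nd]; first exact: dx a b ab e.
  by apply: NNPP => nt; apply: nd => a b ab e; apply: nt; exists (a, b).
split; last by rewrite -(P_ext ties_w).
apply: meas_ext (meas_compl m_ties) => w; rewrite ties_w; tauto.
Qed.

Lemma sum_const_R (I : finType) (P : pred I) (c : R) :
  \big[Rplus/0]_(i | P i) c = INR #|P| * c.
Proof.
rewrite big_const cardE; elim: (size _) => [|k IH]; first by rewrite /=; lra.
by rewrite iterS IH S_INR; lra.
Qed.

Lemma card_sets_avoiding n (i : 'I_n) m :
  #|[pred B : {set 'I_n} | (i \notin B) && (#|B| == m)]| = 'C(n.-1, m).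
Proof.
have -> : n.-1 = #|[set~ i]| by rewrite cardsC1 card_ord.
rewrite -cards_draws; apply: eq_card => B.
by rewrite !inE subsetC sub1set !inE.
Qed.

Lemma cuts_of_size_total n (Om : probability_space) (X : 'I_n -> Om -> R) (i0 : 'I_n) m :
  (forall i, random_variable (X i)) -> no_ties X -> (m < n)%nat ->
  \big[Rplus/0]_(p : 'I_n * {set 'I_n} | (p.1 \notin p.2) && (#|p.2| == m))
    ps_P (fun w => cut p.2 p.1 (fun l => X l w)) = 1.
Proof.
move=> mX ntX m_lt.
pose Q (p : 'I_n * {set 'I_n}) := (p.1 \notin p.2) && (#|p.2| == m).
pose E (p : 'I_n * {set 'I_n}) (w : Om) := cut p.2 p.1 (fun l => X l w).
have mE p : ps_meas (E p) by apply: borel_meas => //; exact: borel_cut.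
have disjE p q : Q p -> Q q -> p <> q -> forall w, E p w -> E q w -> False.
  case: p q => [a B] [b C] /andP[/= aB /eqP cB] /andP[/= bC /eqP cC] pq w.
  by apply: cut_disjoint; rewrite ?cB ?cC.
have [m_U P_U] := P_fin_union mE disjE; rewrite -P_U.
have [m_d P_nd] := distinct_almost_sure i0 mX ntX.
rewrite -(P_full Om) (P_and_almost_sure (meas_full Om) m_d P_nd) (P_and_almost_sure m_U m_d P_nd).
apply: P_ext => w; split=> [[[p _ _] dx]|[_ dx]]; split=> //.
have [k card_k] := cut_cover dx m_lt.
exists (k, above (fun l => X l w) k); last exact: above_cut.
by rewrite /Q /= above_notin card_k eqxx.
Qed.

Lemma sum_const_configurations n m (c : R) :
  \big[Rplus/0]_(p : 'I_n * {set 'I_n} | (p.1 \notin p.2) && (#|p.2| == m)) c =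
  INR n * INR 'C(n.-1, m) * c.
Proof.
pose avoiding k (B : {set 'I_n}) := (k \notin B) && (#|B| == m).
rewrite -(pair_big_dep xpredT avoiding (fun _ _ => c)).
under eq_bigr do rewrite sum_const_R card_sets_avoiding.
by rewrite sum_const_R card_ord Rmult_assoc.
Qed.

(* The value: n * C(n-1, m) equally likely cuts of size m share total probability one. *)
Lemma P_cut n (Om : probability_space) (X : 'I_n -> Om -> R) (A : {set 'I_n}) i :
  (forall k, random_variable (X k)) -> exchangeable X -> no_ties X -> i \notin A ->
  ps_P (fun w => cut A i (fun l => X l w)) = / (INR n * INR 'C(n.-1, #|A|)).
Proof.
move=> mX exX ntX iA.
have n_gt0 : (0 < n)%nat := leq_ltn_trans (leq0n i) (ltn_ord i).
have card_lt : (#|A| < n)%nat by apply: leq_ltn_trans (card_notin iA) _; rewrite ltn_predL.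
have := cuts_of_size_total i mX ntX card_lt.
rewrite (eq_bigr (fun _ => ps_P (fun w => cut A i (fun l => X l w)))); last first.
  by move=> [k B] /andP[/= kB /eqP cardB]; apply: P_cut_invariant.
rewrite sum_const_configurations => total.
have nC_gt0 : 0 < INR n * INR 'C(n.-1, #|A|).
  apply: Rmult_lt_0_compat; apply: lt_0_INR; apply/ltP => //.
  by rewrite bin_gt0; exact: card_notin iA.
apply: (Rmult_eq_reg_l (INR n * INR 'C(n.-1, #|A|))); last lra.
by rewrite Rinv_r; lra.
Qed.

Lemma semicoherent_mono n (phi : {set 'I_n} -> bool) (A B : {set 'I_n}) :
  semicoherent phi -> A \subset B -> phi A -> phi B.
Proof. by case=> mono _ AB; move: (mono A B AB); case: (phi A); case: (phi B). Qed.

(* Component j is critical for phi at x: the system works just before x_j (all components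
   lasting at least x_j) but fails just after it (components outliving x_j). *)
Definition critical n (phi : {set 'I_n} -> bool) (x : 'I_n -> R) (j : 'I_n) : Prop :=
  phi (above x j) = false /\ phi (alive_upto x (x j)) = true.

Definition failed n (phi : {set 'I_n} -> bool) (x : 'I_n -> R) (t : R) : Prop :=
  0 <= t /\ phi (alive x t) = false.

Lemma value_gap n (x : 'I_n -> R) (c : R) :
  exists2 d, 0 < d & forall i, x i <> c -> d <= Rabs (x i - c).
Proof.
suff [d d_gt0 gap] :
    exists2 d, 0 < d & forall i, i \in enum 'I_n -> x i <> c -> d <= Rabs (x i - c).
  by exists d => // i; apply: gap; rewrite mem_enum.
elim: (enum 'I_n) => [|a r [d d_gt0 gap]]; first by exists 1 => //; lra.
case: (Req_dec (x a) c) => [xa|xa].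
  by exists d => // i; rewrite in_cons => /orP[/eqP->|/gap].
have xa_gt0 : 0 < Rabs (x a - c) by apply: Rabs_pos_lt; lra.
exists (Rmin d (Rabs (x a - c))); first exact: Rmin_pos.
move=> i; rewrite in_cons => /orP[/eqP->|/gap gap_i /gap_i]; first by move=> _; exact: Rmin_r.
exact: Rle_trans (Rmin_l _ _).
Qed.

Section Lifetime.
Variables (n : nat) (phi : {set 'I_n} -> bool) (x : 'I_n -> R) (j : 'I_n).
Hypotheses (phi_sc : semicoherent phi) (x_ge0 : forall i, 0 <= x i).

(* If x_j is the failure time, the system is down right after x_j: otherwise, no other
   component failing in (x_j, x_j + d), it would still be working before x_j + d. *)
Lemma inf_failed_down : is_inf (failed phi x) (x j) -> phi (above x j) = false.
Proof.
case=> lb glb; case up: (phi _) => //; exfalso.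
have [d d_gt0 gap] := value_gap x (x j).
suff : x j + d <= x j by lra.
apply: glb => s [s_ge0 down]; apply: Rnot_lt_le => s_lt.
have xj_s := lb s (conj s_ge0 down).
suff : phi (alive x s) by rewrite down.
apply: (semicoherent_mono phi_sc _ up); apply/subsetP => i; rewrite !inE => /RltbP xji; apply/RltbP.
by have := gap i ltac:(lra); rewrite Rabs_right; lra.
Qed.

(* Symmetrically the system is up right before x_j, else it failed at some earlier time. *)
Lemma inf_failed_up : is_inf (failed phi x) (x j) -> phi (alive_upto x (x j)) = true.
Proof.
case=> lb _; case down: (phi _) => //; exfalso.
case: (Rle_lt_dec (x j) 0) => xj.
  have : alive_upto x (x j) = setT.
    by apply/setP => i; rewrite !inE; apply/negP => /RltbP; have := x_ge0 i; lra.
  by move=> all; move: down; rewrite all; case: phi_sc => _ [_ ->].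
have [d d_gt0 gap] := value_gap x (x j).
pose t := Rmax (x j - d) (x j / 2).
have t_ge0 : 0 <= t by apply: Rle_trans (Rmax_r _ _); lra.
have t_lt : t < x j by apply: Rmax_lub_lt; lra.
suff : x j <= t by lra.
apply: lb; split=> //; case up: (phi _) => //; exfalso.
suff : phi (alive_upto x (x j)) by rewrite down.
apply: (semicoherent_mono phi_sc _ up); apply/subsetP => i; rewrite !inE => /RltbP ti.
apply/negP => /RltbP xij; have := Rmax_l (x j - d) (x j / 2).
by have := gap i ltac:(lra); rewrite Rabs_left; rewrite -/t; lra.
Qed.

Lemma is_inf_failed_critical : is_inf (failed phi x) (x j) <-> critical phi x j.
Proof.
split=> [inf|[down up]]; first by split; [exact: inf_failed_down|exact: inf_failed_up].
split=> [s [s_ge0 down_s]|m lb]; last by apply: lb; split.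
apply: Rnot_lt_le => s_lt; suff : phi (alive x s) by rewrite down_s.
apply: (semicoherent_mono phi_sc _ up); apply/subsetP => i; rewrite !inE => /negP xij; apply/RltbP.
by case: (Rlt_le_dec s (x i)) => // xi; exfalso; apply: xij; apply/RltbP; lra.
Qed.

End Lifetime.

Definition critical_set n (phi : {set 'I_n} -> bool) (j : 'I_n) (A : {set 'I_n}) : bool :=
  [&& j \notin A, phi (j |: A) & ~~ phi A].

Lemma critical_cut n (phi : {set 'I_n} -> bool) (x : 'I_n -> R) (j : 'I_n) :
  distinct x -> critical phi x j <-> exists2 A, critical_set phi j A & cut A j x.
Proof.
move=> dx; split=> [[down up]|[A /and3P[jA up /negbTE down] cutA]].
  have jA := above_notin x j; have cutA := above_cut (i := j) dx.
  exists (above x j) => //; move: up; rewrite (cut_alive_upto jA cutA) => up.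
  by rewrite /critical_set jA up down.
by rewrite /critical (cut_above jA cutA) (cut_alive_upto jA cutA) down.
Qed.

(* Criticality is Borel, being a predicate of two random sets with Borel memberships. *)
Lemma borel_critical n (phi : {set 'I_n} -> bool) (j : 'I_n) :
  borel_Rn (fun x => critical phi x j).
Proof.
apply: borel_and.
  apply: (@borel_set_pred _ j (fun x => above x j) (fun A => phi A = false)) => l.
  by apply: borel_ext (borel_lt j l) => x; rewrite inE; split=> /RltbP.
apply: (@borel_set_pred _ j (fun x => alive_upto x (x j)) (fun A => phi A = true)) => l.
apply: borel_ext (borel_compl (borel_lt l j)) => x; rewrite inE.
by split=> [xlj|/negP nlt /RltbP]; [apply/negP => /RltbP|].
Qed.

(* By monotonicity, phi(A + j) - phi(A) is the indicator of A being a critical path set. *)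
Lemma bcoef_critical_sets n (phi : {set 'I_n} -> bool) (j : 'I_n) :
  semicoherent phi ->
  bcoef phi j = \big[Rplus/0]_(A | critical_set phi j A) / (INR n * INR 'C(n.-1, #|A|)).
Proof.
move=> phi_sc; rewrite /bcoef big_mkcond [RHS]big_mkcond; apply: eq_bigr => A _.
rewrite /critical_set; case: (j \in A) => //=.
have : phi A -> phi (j |: A) by apply: (semicoherent_mono phi_sc); exact: subsetUr.
by case: (phi A); case: (phi (j |: A)) => //= mono; first [by move: (mono isT) | lra].
Qed.

Unset Implicit Arguments.

Theorem corollary8 (n : nat) (phi : {set 'I_n} -> bool)
  (Om : probability_space) (X : 'I_n -> Om -> R) :
  semicoherent phi ->
  (forall i, random_variable (X i)) ->
  (forall i w, 0 <= X i w) ->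
  exchangeable X ->
  no_ties X ->
  forall j : 'I_n, I_BP phi X j = bcoef phi j.
Proof.
move=> phi_sc mX X_ge0 exX ntX j.
pose cut_at A w := cut A j (fun l => X l w).
have m_crit := borel_meas mX (borel_critical phi j).
have [m_dist P_ndist] := distinct_almost_sure j mX ntX.
have m_cut A : ps_meas (cut_at A) by apply: borel_meas => //; exact: borel_cut.
have disj A B : critical_set phi j A -> critical_set phi j B -> A <> B ->
    forall w, cut_at A w -> cut_at B w -> False.
  move=> /and3P[jA _ _] /and3P[jB _ _] AB w cutA cutB.
  by apply: AB; rewrite -(cut_above jA cutA) (cut_above jB cutB).
have [m_U P_U] := P_fin_union m_cut disj.
rewrite /I_BP (P_ext (fun w => is_inf_failed_critical j phi_sc (X_ge0^~ w))).
rewrite (P_and_almost_sure m_crit m_dist P_ndist).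
rewrite (P_ext (B := fun w => (exists2 A, critical_set phi j A & cut_at A w) /\
                              distinct (fun l => X l w))); last first.
  by move=> w; split=> -[crit dx]; split=> //; apply/(critical_cut phi j dx).
rewrite -(P_and_almost_sure m_U m_dist P_ndist) P_U (bcoef_critical_sets j phi_sc).
by apply: eq_bigr => A /and3P[jA _ _]; apply: P_cut.
Qed.
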